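(* There is an absolute constant $c>0$ such that for any two disjoint finite point sets $P,S$ in the plane with $P\cup S$ generic, every edge $e$ of $T_P$ crosses at most $c$ edges of $T_S$ whose length is at least the length of $e$.
   Context: A finite planar point set is in general position if no three of its points are collinear; it is generic if it is in general position and every subset has a unique Euclidean minimum spanning tree (MST). For a generic set $X$, $T_X$ denotes its MST, with edges drawn as straight segments. *)

From Stdlib Require Import Reals List.
Import ListNotations.
Open Scope R_scope.

Definition point : Type := (R * R)%type.
Definition edge : Type := (point * point)%type.

Definition dist (p q : point) : R :=
  sqrt ((fst p - fst q)^2 + (snd p - snd q)^2).

Definition elen (e : edge) : R := dist (fst e) (snd e).

Definition orient (p q r : point) : R :=
  (fst q - fst p) * (snd r - snd p) - (snd q - snd p) * (fst r - fst p).

Definition general_position (X : list point) : Prop :=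
  forall p q r, In p X -> In q X -> In r X ->
    p <> q -> q <> r -> p <> r -> orient p q r <> 0.

Definition adj (E : list edge) (p q : point) : Prop :=
  In (p, q) E \/ In (q, p) E.

Inductive reach (E : list edge) : point -> point -> Prop :=
| reach_refl : forall p, reach E p p
| reach_step : forall p q r, reach E p q -> adj E q r -> reach E p r.

(* E is a spanning tree of the vertex set X: edges join distinct points of X,
   the graph is connected on X, and it is acyclic (no edge lies on a cycle:
   deleting any edge disconnects its endpoints). *)
Definition spanning_tree (X : list point) (E : list edge) : Prop :=
  (forall e, In e E -> In (fst e) X /\ In (snd e) X /\ fst e <> snd e) /\
  (forall p q, In p X -> In q X -> reach E p q) /\
  (forall E1 e E2, E = E1 ++ e :: E2 -> ~ reach (E1 ++ E2) (fst e) (snd e)).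

Definition weight (E : list edge) : R :=
  fold_right (fun e acc => elen e + acc) 0 E.

Definition is_MST (X : list point) (T : list edge) : Prop :=
  spanning_tree X T /\ forall T', spanning_tree X T' -> weight T <= weight T'.

Definition same_edges (E1 E2 : list edge) : Prop :=
  forall p q, adj E1 p q <-> adj E2 p q.

Definition generic (X : list point) : Prop :=
  general_position X /\
  forall Y, NoDup Y -> incl Y X ->
    forall T1 T2, is_MST Y T1 -> is_MST Y T2 -> same_edges T1 T2.

Definition crosses (e f : edge) : Prop :=
  exists s t, 0 <= s <= 1 /\ 0 <= t <= 1 /\
    fst (fst e) + s * (fst (snd e) - fst (fst e))
      = fst (fst f) + t * (fst (snd f) - fst (fst f)) /\
    snd (fst e) + s * (snd (snd e) - snd (fst e))
      = snd (fst f) + t * (snd (snd f) - snd (fst f)).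

From Pilot Require Import Defs.
From Stdlib Require Import Reals Rgeom List Lra Lia ZArith Classical.
Import ListNotations.
Open Scope R_scope.

(* Deleting an edge f = ab from the minimum spanning tree T_S splits it into two components,
   and by the cut property points of S on opposite sides are at least |f| apart; for any
   other tree edge g = cd this gives |f| <= |ac| or |f| <= |bd|.
   Sort the edges of T_S that cross e and are at least as long as e into boundedly many
   cells, according to their direction and the position of the crossing on e (both up to
   1/16), and to whether the crossing lies within |e|/4 of an endpoint of the edge.  If f
   and g share a cell and g is not longer than f, they are nearly parallel and cross e at
   nearly the same point, which forces both |ac| < |f| and |bd| < |f|.  So every cell holds
   at most one edge, and c is the number of cells. *)

Lemma reach_trans E p q r : reach E p q -> reach E q r -> reach E p r.
Proof.
  intros Hpq; induction 1 as [|q r s _ IH Hadj]; [exact Hpq|].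
  exact (reach_step E p r s (IH Hpq) Hadj).
Qed.

Lemma reach_adj E p q : adj E p q -> reach E p q.
Proof. exact (reach_step E p p q (reach_refl E p)). Qed.

Lemma reach_sym E p q : reach E p q -> reach E q p.
Proof.
  induction 1 as [|p q r _ IH Hadj]; [apply reach_refl|].
  apply (reach_trans E r q p); [|exact IH].
  apply reach_adj; unfold adj in *; tauto.
Qed.

Lemma reach_incl E E' p q :
  (forall x y, adj E x y -> adj E' x y) -> reach E p q -> reach E' p q.
Proof.
  intros HE; induction 1 as [|p q r _ IH Hadj]; [apply reach_refl|].
  exact (reach_step E' p q r IH (HE q r Hadj)).
Qed.

Lemma adj_remove E1 e E2 x y :
  adj (E1 ++ e :: E2) x y -> adj (E1 ++ E2) x y \/ e = (x, y) \/ e = (y, x).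
Proof.
  unfold adj; rewrite !in_app_iff; simpl; intuition.
Qed.

Lemma reach_remove_cycle_edge E1 e E2 p q :
  reach (E1 ++ E2) (fst e) (snd e) ->
  reach (E1 ++ e :: E2) p q -> reach (E1 ++ E2) p q.
Proof.
  intros He; induction 1 as [|p q r _ IH Hadj]; [apply reach_refl|].
  destruct (adj_remove E1 e E2 q r Hadj) as [Hqr | [-> | ->]].
  - exact (reach_step _ p q r IH Hqr).
  - exact (reach_trans _ p q r IH He).
  - exact (reach_trans _ p q r IH (reach_sym _ _ _ He)).
Qed.

Lemma reach_remove_edge E1 f E2 p :
  reach (E1 ++ f :: E2) (fst f) p ->
  reach (E1 ++ E2) (fst f) p \/ reach (E1 ++ E2) (snd f) p.
Proof.
  remember (fst f) as a eqn:Ha.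
  induction 1 as [|a q r _ IH Hadj]; [left; apply reach_refl|].
  destruct (adj_remove E1 f E2 q r Hadj) as [Hqr | [-> | ->]].
  - destruct (IH Ha) as [H | H]; [left | right]; exact (reach_step _ _ q r H Hqr).
  - right; apply reach_refl.
  - subst a; left; apply reach_refl.
Qed.

Lemma weight_app E1 E2 : weight (E1 ++ E2) = weight E1 + weight E2.
Proof. induction E1 as [|e E1 IH]; simpl; [lra | rewrite IH; lra]. Qed.

Lemma elen_nonneg e : 0 <= elen e.
Proof. apply sqrt_pos. Qed.

Lemma spanning_subtree X E :
  (forall e, In e E -> In (fst e) X /\ In (snd e) X /\ fst e <> snd e) ->
  (forall p q, In p X -> In q X -> reach E p q) ->
  exists T, spanning_tree X T /\ weight T <= weight E.
Proof.
  remember (length E) as n eqn:Hn; revert E Hn.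
  induction n as [n IH] using lt_wf_ind; intros E Hn Hedges Hconn.
  destruct (classic (forall E1 e E2, E = E1 ++ e :: E2 ->
                       ~ reach (E1 ++ E2) (fst e) (snd e))) as [Hacyc | Hcyc].
  { exists E; split; [split; [|split]; assumption | apply Rle_refl]. }
  apply not_all_ex_not in Hcyc as [E1 Hcyc].
  apply not_all_ex_not in Hcyc as [e Hcyc].
  apply not_all_ex_not in Hcyc as [E2 Hcyc].
  apply imply_to_and in Hcyc as [-> Hcycle]; apply NNPP in Hcycle.
  destruct (IH (length (E1 ++ E2))) with (E := E1 ++ E2) as [T [HT Hw]]; auto.
  - rewrite Hn, !length_app; simpl; lia.
  - intros f Hf; apply Hedges; apply in_app_iff in Hf; apply in_app_iff; simpl; tauto.
  - intros p q Hp Hq; exact (reach_remove_cycle_edge E1 e E2 p q Hcycle (Hconn p q Hp Hq)).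
  - exists T; split; [exact HT|].
    rewrite !weight_app in *; simpl; pose proof (elen_nonneg e); lra.
Qed.

Lemma MST_cut S TS E1 f E2 x y :
  is_MST S TS -> TS = E1 ++ f :: E2 -> In x S -> In y S ->
  reach (E1 ++ E2) (fst f) x -> reach (E1 ++ E2) (snd f) y ->
  elen f <= Defs.dist x y.
Proof.
  intros [[Hedges [Hconn Hacyc]] Hmin] HTS Hx Hy Hfx Hfy.
  assert (Hfa : In (fst f) S).
  { apply (Hedges f); rewrite HTS; apply in_or_app; simpl; auto. }
  apply Rnot_lt_le; intros Hshort.
  assert (Hxy : x <> y).
  { intros <-; apply (Hacyc E1 f E2 HTS).
    exact (reach_trans _ _ _ _ Hfx (reach_sym _ _ _ Hfy)). }
  set (T' := (E1 ++ E2) ++ [(x, y)]).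
  assert (Hsub : forall u v, adj (E1 ++ E2) u v -> adj T' u v).
  { unfold adj, T'; intros u v; rewrite !in_app_iff; tauto. }
  assert (Hroot : forall p, In p S -> reach T' (fst f) p).
  { intros p Hp.
    pose proof (Hconn _ _ Hfa Hp) as Hfp; rewrite HTS in Hfp.
    destruct (reach_remove_edge E1 f E2 p Hfp) as [Hp1 | Hp2].
    - exact (reach_incl _ _ _ _ Hsub Hp1).
    - apply (reach_trans _ _ x); [exact (reach_incl _ _ _ _ Hsub Hfx)|].
      apply (reach_trans _ _ y).
      + apply reach_adj; left; unfold T'; apply in_app_iff; simpl; auto.
      + apply (reach_trans _ _ (snd f)); apply (reach_incl _ _ _ _ Hsub);
          [apply reach_sym|]; assumption. }
  destruct (spanning_subtree S T') as [T [HT Hw]].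
  - intros g Hg; unfold T' in Hg; rewrite in_app_iff in Hg.
    destruct Hg as [Hg | [<- | []]]; [|simpl; auto].
    apply Hedges; rewrite HTS; apply in_app_iff; apply in_app_iff in Hg; simpl; tauto.
  - intros p q Hp Hq.
    exact (reach_trans _ _ _ _ (reach_sym _ _ _ (Hroot p Hp)) (Hroot q Hq)).
  - specialize (Hmin T HT); unfold T' in Hw; rewrite HTS in Hmin.
    rewrite !weight_app in *; simpl in *; unfold elen in Hw at 1; simpl in Hw; lra.
Qed.

Lemma dist_sym p q : Defs.dist p q = Defs.dist q p.
Proof. unfold Defs.dist; f_equal; ring. Qed.

Lemma MST_edge_pair S TS f g :
  is_MST S TS -> In f TS -> In g TS -> f <> g ->
  elen f <= Defs.dist (fst f) (fst g) \/ elen f <= Defs.dist (snd f) (snd g).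
Proof.
  intros HMST Hf Hg Hfg.
  destruct (in_split f TS Hf) as (E1 & E2 & HTS).
  pose proof HMST as [[Hedges [Hconn _]] _].
  destruct (Hedges f Hf) as (Hf1 & Hf2 & _); destruct (Hedges g Hg) as (Hg1 & Hg2 & _).
  assert (Hg' : In g (E1 ++ E2)).
  { rewrite HTS, in_app_iff in Hg; simpl in Hg; apply in_app_iff; intuition congruence. }
  assert (Hgg : reach (E1 ++ E2) (fst g) (snd g))
    by (apply reach_adj; left; destruct g; exact Hg').
  pose proof (Hconn _ _ Hf1 Hg1) as Hfg1; rewrite HTS in Hfg1.
  destruct (reach_remove_edge E1 f E2 (fst g) Hfg1) as [Hg1a | Hg1b].
  - right; rewrite (dist_sym (snd f)).
    apply (MST_cut S TS E1 f E2); auto; [exact (reach_trans _ _ _ _ Hg1a Hgg) | apply reach_refl].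
  - left; apply (MST_cut S TS E1 f E2); auto; apply reach_refl.
Qed.

Lemma NoDup_rel_injective_length {A B : Type} (L : list A) (K : list B) (Rk : A -> B -> Prop) :
  NoDup L -> (forall x, In x L -> exists k, In k K /\ Rk x k) ->
  (forall x y k, In x L -> In y L -> Rk x k -> Rk y k -> x = y) ->
  (length L <= length K)%nat.
Proof.
  revert K; induction L as [|x L IH]; intros K HL Hex Hinj; simpl; [lia|].
  inversion HL as [|? ? HxL HL']; subst.
  destruct (Hex x (or_introl eq_refl)) as (k & Hk & Hxk).
  destruct (in_split k K Hk) as (K1 & K2 & ->).
  enough (length L <= length (K1 ++ K2))%nat by (rewrite !length_app in *; simpl; lia).
  apply IH; auto.
  - intros y Hy; destruct (Hex y (or_intror Hy)) as (k' & Hk' & Hyk').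
    exists k'; split; [|exact Hyk'].
    apply in_app_or in Hk' as [Hk' | [<- | Hk']]; auto using in_or_app.
    rewrite (Hinj x y k (or_introl eq_refl) (or_intror Hy) Hxk Hyk') in HxL; contradiction.
  - intros y z k' Hy Hz; apply Hinj; simpl; auto.
Qed.

Definition vnorm (x y : R) : R := sqrt (x ^ 2 + y ^ 2).

Lemma vnorm_nonneg x y : 0 <= vnorm x y.
Proof. apply sqrt_pos. Qed.

Lemma vnorm_triangle x1 y1 x2 y2 :
  vnorm (x1 + x2) (y1 + y2) <= vnorm x1 y1 + vnorm x2 y2.
Proof.
  pose proof (triangle (x1 + x2) (y1 + y2) 0 0 x2 y2) as H.
  unfold dist_euc in H; rewrite !Rsqr_pow2 in H; unfold vnorm.
  replace (x1 + x2 - x2) with x1 in H by ring; replace (y1 + y2 - y2) with y1 in H by ring.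
  rewrite !Rminus_0_r in H; exact H.
Qed.

Lemma vnorm_scale k x y : vnorm (k * x) (k * y) = Rabs k * vnorm x y.
Proof.
  unfold vnorm; rewrite <- sqrt_Rsqr_abs, <- sqrt_mult_alt by apply Rle_0_sqr.
  f_equal; unfold Rsqr; ring.
Qed.

Lemma vnorm_le_abs x y : vnorm x y <= Rabs x + Rabs y.
Proof.
  assert (Hx : vnorm x 0 = Rabs x)
    by (unfold vnorm; rewrite <- sqrt_Rsqr_abs; f_equal; unfold Rsqr; ring).
  assert (Hy : vnorm 0 y = Rabs y)
    by (unfold vnorm; rewrite <- sqrt_Rsqr_abs; f_equal; unfold Rsqr; ring).
  rewrite <- Hx, <- Hy, <- (Rplus_0_r x) at 1; rewrite <- (Rplus_0_l y) at 1.
  apply vnorm_triangle.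
Qed.

Lemma vnorm_sub_scaled a b ux uy vx vy :
  0 <= a -> 0 <= b -> vnorm ux uy <= 1 -> vnorm vx vy <= 1 ->
  vnorm (b * vx - a * ux) (b * vy - a * uy)
    <= Rabs (b - a) + Rmin a b * vnorm (vx - ux) (vy - uy).
Proof.
  intros Ha Hb Hu Hv.
  pose proof (vnorm_nonneg (vx - ux) (vy - uy)).
  destruct (Rle_or_lt a b) as [Hab | Hba].
  - replace (b * vx - a * ux) with ((b - a) * vx + a * (vx - ux)) by ring.
    replace (b * vy - a * uy) with ((b - a) * vy + a * (vy - uy)) by ring.
    eapply Rle_trans; [apply vnorm_triangle|].
    rewrite !vnorm_scale, (Rabs_pos_eq a), Rmin_left by lra.
    pose proof (Rabs_pos (b - a)); nra.
  - replace (b * vx - a * ux) with ((b - a) * ux + b * (vx - ux)) by ring.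
    replace (b * vy - a * uy) with ((b - a) * uy + b * (vy - uy)) by ring.
    eapply Rle_trans; [apply vnorm_triangle|].
    rewrite !vnorm_scale, (Rabs_pos_eq b), Rmin_right by lra.
    pose proof (Rabs_pos (b - a)); nra.
Qed.

Lemma dist_vnorm p q : Defs.dist p q = vnorm (fst p - fst q) (snd p - snd q).
Proof. reflexivity. Qed.

Lemma dist_pos p q : p <> q -> 0 < Defs.dist p q.
Proof.
  intros Hpq; apply sqrt_lt_R0; rewrite <- !Rsqr_pow2.
  assert (Hd : fst p - fst q <> 0 \/ snd p - snd q <> 0).
  { destruct p as [px py], q as [qx qy]; simpl.
    destruct (Req_dec px qx); [right | left]; [intros Hy; apply Hpq; f_equal|]; lra. }
  destruct Hd; [apply Rplus_lt_le_0_compat | apply Rplus_le_lt_0_compat];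
    auto using Rsqr_pos_lt, Rle_0_sqr.
Qed.

Definition dir_x (f : edge) : R := (fst (snd f) - fst (fst f)) / elen f.
Definition dir_y (f : edge) : R := (snd (snd f) - snd (fst f)) / elen f.

Lemma elen_pos f : fst f <> snd f -> 0 < elen f.
Proof. apply dist_pos. Qed.

Lemma elen_dir f : fst f <> snd f ->
  elen f * dir_x f = fst (snd f) - fst (fst f) /\ elen f * dir_y f = snd (snd f) - snd (fst f).
Proof.
  intros Hf; pose proof (elen_pos f Hf); unfold dir_x, dir_y; split; field; lra.
Qed.

Lemma dir_unit f : fst f <> snd f -> dir_x f ^ 2 + dir_y f ^ 2 = 1.
Proof.
  intros Hf; pose proof (elen_pos f Hf).
  assert (Hsq : elen f ^ 2 = (fst (fst f) - fst (snd f)) ^ 2 + (snd (fst f) - snd (snd f)) ^ 2)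
    by (apply pow2_sqrt, Rplus_le_le_0_compat; apply pow2_ge_0).
  unfold dir_x, dir_y.
  replace (((fst (snd f) - fst (fst f)) / elen f) ^ 2 + ((snd (snd f) - snd (fst f)) / elen f) ^ 2)
    with (((fst (fst f) - fst (snd f)) ^ 2 + (snd (fst f) - snd (snd f)) ^ 2) / elen f ^ 2)
    by (field; lra).
  rewrite <- Hsq; field; lra.
Qed.

Lemma vnorm_dir f : fst f <> snd f -> vnorm (dir_x f) (dir_y f) = 1.
Proof. intros Hf; unfold vnorm; rewrite (dir_unit f Hf); apply sqrt_1. Qed.

Lemma dir_bounds f : fst f <> snd f -> -1 <= dir_x f <= 1 /\ -1 <= dir_y f <= 1.
Proof.
  intros Hf; pose proof (dir_unit f Hf).
  pose proof (pow2_ge_0 (dir_x f)); pose proof (pow2_ge_0 (dir_y f)).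
  split; split; nra.
Qed.

(* [crosses e f] is convertible to [exists s t, crossing_at e f s t]. *)
Definition crossing_at (e f : edge) (s t : R) : Prop :=
  0 <= s <= 1 /\ 0 <= t <= 1 /\
  fst (fst e) + s * (fst (snd e) - fst (fst e)) = fst (fst f) + t * (fst (snd f) - fst (fst f)) /\
  snd (fst e) + s * (snd (snd e) - snd (fst e)) = snd (fst f) + t * (snd (snd f) - snd (fst f)).

Lemma crossing_endpoint_dist e f g s t s' t' :
  fst f <> snd f -> fst g <> snd g -> crossing_at e f s t -> crossing_at e g s' t' ->
  Defs.dist (fst f) (fst g)
    <= Rabs (s - s') * elen e + Rabs (t' * elen g - t * elen f)
       + Rmin (t * elen f) (t' * elen g)
         * vnorm (dir_x g - dir_x f) (dir_y g - dir_y f) /\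
  Defs.dist (snd f) (snd g)
    <= Rabs (s - s') * elen e + Rabs ((1 - t) * elen f - (1 - t') * elen g)
       + Rmin ((1 - t') * elen g) ((1 - t) * elen f)
         * vnorm (dir_x f - dir_x g) (dir_y f - dir_y g).
Proof.
  intros Hf Hg (Hs & Ht & Hfx & Hfy) (Hs' & Ht' & Hgx & Hgy).
  destruct (elen_dir f Hf) as [Hux Huy]; destruct (elen_dir g Hg) as [Hvx Hvy].
  pose proof (elen_pos f Hf); pose proof (elen_pos g Hg).
  pose proof (vnorm_dir f Hf); pose proof (vnorm_dir g Hg).
  set (ex := fst (fst e) - fst (snd e)); set (ey := snd (fst e) - snd (snd e)).
  assert (He : vnorm ((s' - s) * ex) ((s' - s) * ey) = Rabs (s - s') * elen e)
    by (rewrite vnorm_scale, Rabs_minus_sym; reflexivity).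
  rewrite !dist_vnorm; split.
  - replace (fst (fst f) - fst (fst g))
      with ((s' - s) * ex + (t' * elen g * dir_x g - t * elen f * dir_x f)) by (unfold ex; nra).
    replace (snd (fst f) - snd (fst g))
      with ((s' - s) * ey + (t' * elen g * dir_y g - t * elen f * dir_y f)) by (unfold ey; nra).
    eapply Rle_trans; [apply vnorm_triangle|]; rewrite He, Rplus_assoc.
    apply Rplus_le_compat_l, vnorm_sub_scaled; first [lra | nra].
  - replace (fst (snd f) - fst (snd g))
      with ((s' - s) * ex + ((1 - t) * elen f * dir_x f - (1 - t') * elen g * dir_x g))
      by (unfold ex; nra).
    replace (snd (snd f) - snd (snd g))
      with ((s' - s) * ey + ((1 - t) * elen f * dir_y f - (1 - t') * elen g * dir_y g))
      by (unfold ey; nra).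
    eapply Rle_trans; [apply vnorm_triangle|]; rewrite He, Rplus_assoc.
    apply Rplus_le_compat_l, vnorm_sub_scaled; first [lra | nra].
Qed.

Definition side (l a b : R) : nat :=
  if Rlt_dec a (l / 4) then 1%nat else if Rlt_dec b (l / 4) then 2%nat else 0%nat.

(* a, b (resp. c, d) are the distances from the crossing point to the two endpoints of the
   longer (resp. shorter) edge. *)
Lemma side_gaps_lt l a b c d :
  0 < l -> 0 <= a -> 0 <= b -> 0 <= c -> 0 <= d -> l <= c + d <= a + b ->
  side l a b = side l c d ->
  l / 16 + Rabs (c - a) + Rmin a c / 8 < a + b /\
  l / 16 + Rabs (b - d) + Rmin d b / 8 < a + b.
Proof.
  unfold side, Rabs, Rmin; intros; repeat destruct (Rlt_dec _ _); try discriminate;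
    repeat destruct (Rcase_abs _); repeat destruct (Rle_dec _ _); split; lra.
Qed.

Definition bucket (r : R) : nat := Z.to_nat (up (16 * r)).

Lemma bucket_in_seq r n : 0 <= r <= INR n -> In (bucket r) (seq 1 (16 * n + 1)).
Proof.
  intros Hr; destruct (archimed (16 * r)) as [Hlo Hhi].
  assert (H1 : (0 < up (16 * r))%Z) by (apply lt_IZR; simpl; lra).
  assert (H2 : (up (16 * r) <= 16 * Z.of_nat n + 1)%Z).
  { apply le_IZR; rewrite plus_IZR, mult_IZR, <- INR_IZR_INZ; simpl; lra. }
  apply in_seq; unfold bucket; lia.
Qed.

Lemma bucket_close r r' : 0 <= r -> 0 <= r' -> bucket r = bucket r' -> Rabs (r - r') < / 16.
Proof.
  intros Hr Hr' Hb; unfold bucket in Hb.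
  destruct (archimed (16 * r)) as [Hlo Hhi]; destruct (archimed (16 * r')) as [Hlo' Hhi'].
  assert (Hup : up (16 * r) = up (16 * r')).
  { assert (0 < up (16 * r))%Z by (apply lt_IZR; simpl; lra).
    assert (0 < up (16 * r'))%Z by (apply lt_IZR; simpl; lra). lia. }
  rewrite Hup in Hlo, Hhi; apply Rabs_def1; lra.
Qed.

Definition cell (e f : edge) (s t : R) : nat * nat * nat * nat :=
  (side (elen e) (t * elen f) ((1 - t) * elen f),
   bucket (dir_x f + 1), bucket (dir_y f + 1), bucket s).

Definition cells : list (nat * nat * nat * nat) :=
  list_prod (list_prod (list_prod [0; 1; 2]%nat (seq 1 33)) (seq 1 33)) (seq 1 17).

Lemma cell_in_cells e f s t : fst f <> snd f -> crossing_at e f s t -> In (cell e f s t) cells.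
Proof.
  intros Hf (Hs & _); destruct (dir_bounds f Hf) as [Hx Hy].
  repeat apply in_prod.
  - unfold side; repeat destruct (Rlt_dec _ _); simpl; auto.
  - apply (bucket_in_seq _ 2); simpl; lra.
  - apply (bucket_in_seq _ 2); simpl; lra.
  - apply (bucket_in_seq _ 1); simpl; lra.
Qed.

Lemma same_cell_endpoints_close e f g s t s' t' :
  fst f <> snd f -> fst g <> snd g -> 0 < elen e -> elen e <= elen g <= elen f ->
  crossing_at e f s t -> crossing_at e g s' t' -> cell e f s t = cell e g s' t' ->
  Defs.dist (fst f) (fst g) < elen f /\ Defs.dist (snd f) (snd g) < elen f.
Proof.
  intros Hf Hg He Hlen Hcf Hcg Hcell.
  destruct (crossing_endpoint_dist e f g s t s' t' Hf Hg Hcf Hcg) as [Dfst Dsnd].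
  destruct Hcf as (Hs & Ht & _); destruct Hcg as (Hs' & Ht' & _).
  destruct (dir_bounds f Hf) as [Hfx Hfy]; destruct (dir_bounds g Hg) as [Hgx Hgy].
  pose proof (elen_pos f Hf); pose proof (elen_pos g Hg).
  injection Hcell as Hside Hbx Hby Hbs.
  apply bucket_close in Hbx, Hby, Hbs; try lra.
  replace (dir_x f + 1 - (dir_x g + 1)) with (dir_x f - dir_x g) in Hbx by ring.
  replace (dir_y f + 1 - (dir_y g + 1)) with (dir_y f - dir_y g) in Hby by ring.
  assert (Hdir : vnorm (dir_x g - dir_x f) (dir_y g - dir_y f) <= / 8 /\
                 vnorm (dir_x f - dir_x g) (dir_y f - dir_y g) <= / 8).
  { split; eapply Rle_trans; try apply vnorm_le_abs;
      [rewrite (Rabs_minus_sym (dir_x g)), (Rabs_minus_sym (dir_y g))|]; lra. }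
  destruct (side_gaps_lt (elen e) (t * elen f) ((1 - t) * elen f) (t' * elen g) ((1 - t') * elen g))
    as [Gfst Gsnd]; [nra .. | exact Hside |].
  assert (Hpos : Rabs (s - s') * elen e <= elen e / 16) by nra.
  split.
  - assert (0 <= Rmin (t * elen f) (t' * elen g)) by (apply Rmin_glb; nra). nra.
  - assert (0 <= Rmin ((1 - t') * elen g) ((1 - t) * elen f)) by (apply Rmin_glb; nra). nra.
Qed.

Lemma MST_same_cell_eq S TS e f g s t s' t' :
  is_MST S TS -> In f TS -> In g TS -> 0 < elen e -> elen e <= elen f -> elen e <= elen g ->
  crossing_at e f s t -> crossing_at e g s' t' -> cell e f s t = cell e g s' t' -> f = g.
Proof.
  intros HMST Hf Hg He Hef Heg Hcf Hcg Hcell.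
  destruct (classic (f = g)) as [| Hfg]; [assumption | exfalso].
  pose proof HMST as [[Hedges _] _].
  destruct (Hedges f Hf) as (_ & _ & Hff); destruct (Hedges g Hg) as (_ & _ & Hgg).
  destruct (Rle_or_lt (elen g) (elen f)) as [Hgf | Hfg'].
  - destruct (same_cell_endpoints_close e f g s t s' t' Hff Hgg He (conj Heg Hgf) Hcf Hcg Hcell)
      as [D1 D2].
    destruct (MST_edge_pair S TS f g HMST Hf Hg Hfg) as [P | P]; lra.
  - destruct (same_cell_endpoints_close e g f s' t' s t Hgg Hff He (conj Hef (Rlt_le _ _ Hfg'))
                Hcg Hcf (eq_sym Hcell)) as [D1 D2].
    destruct (MST_edge_pair S TS g f HMST Hg Hf (not_eq_sym Hfg)) as [P | P]; lra.
Qed.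

Theorem lemma2 :
  exists c : R, 0 < c /\
    forall (P S : list point),
      NoDup P -> NoDup S ->
      (forall x, In x P -> ~ In x S) ->
      generic (P ++ S) ->
      forall TP TS, is_MST P TP -> is_MST S TS ->
      forall e, In e TP ->
      forall L : list edge, NoDup L ->
        (forall f, In f L -> In f TS /\ elen e <= elen f /\ crosses e f) ->
        INR (length L) <= c.
Proof.
  exists (INR (length cells)); split.
  { apply lt_0_INR; unfold cells; rewrite !length_prod, !length_seq.
    repeat apply Nat.mul_pos_pos; simpl; lia. }
  intros P S _ _ _ _ TP TS [[HTP _] _] HTS e He L HL Hcross.
  assert (Hlen : 0 < elen e) by (apply elen_pos, (HTP e He)).
  apply le_INR, (NoDup_rel_injective_length L cells
                   (fun f k => exists s t, crossing_at e f s t /\ k = cell e f s t)); auto.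
  - intros f Hf; destruct (Hcross f Hf) as (HfT & _ & s & t & Hst).
    pose proof HTS as [[HTS_edges _] _]; destruct (HTS_edges f HfT) as (_ & _ & Hff).
    exists (cell e f s t); split; [apply cell_in_cells; assumption | exists s, t; auto].
  - intros f g k Hf Hg (s & t & Hf_st & ->) (s' & t' & Hg_st & Hk).
    destruct (Hcross f Hf) as (HfT & Hef & _); destruct (Hcross g Hg) as (HgT & Heg & _).
    exact (MST_same_cell_eq S TS e f g s t s' t' HTS HfT HgT Hlen Hef Heg Hf_st Hg_st Hk).
Qed.
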